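(* Let $(G,* )$ be a Tychonoff $\aleph_0$-bounded topological group. Then every Rothberger bounded subset of $G$ is zero-dimensional.
   Context: A topological group $(G,* )$ is $\aleph_0$-bounded if for every open neighborhood $U$ of the identity there is a countable $C\subseteq G$ with $C*U=G$. A subset $X$ of $G$ is Rothberger bounded if for every sequence $(U_n:n<\omega)$ of open neighborhoods of the identity there are $g_n\in G$ with $X\subseteq\bigcup_n g_n*U_n$. *)

From HB Require Import structures.
From mathcomp Require Import all_boot all_order all_algebra.
From mathcomp Require Import all_classical all_reals all_analysis.
From mathcomp Require Import Rstruct Rstruct_topology.
From Stdlib Require Import Reals.

Set Implicit Arguments.
Unset Strict Implicit.
Unset Printing Implicit Defensive.

Local Open Scope classical_set_scope.

Definition topological_group (T : topologicalType)
  (mul : T -> T -> T) (inv : T -> T) (e : T) : Prop :=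
  [/\ (forall x y z, mul x (mul y z) = mul (mul x y) z),
      (forall x, mul e x = x /\ mul x e = x),
      (forall x, mul (inv x) x = e /\ mul x (inv x) = e),
      continuous (fun p : T * T => mul p.1 p.2) &
      continuous inv].

Definition tychonoff_space (T : topologicalType) : Prop :=
  accessible_space T /\
  forall (a : T) (B : set T), closed B -> ~ B a ->
    exists f : T -> R, [/\ continuous f, f a = 0%R &
                          forall b, B b -> f b = 1%R].

Definition ltranslate (T : Type) (mul : T -> T -> T) (g : T) (U : set T) :
  set T := [set mul g u | u in U].

Definition aleph0_bounded (T : topologicalType) (mul : T -> T -> T) (e : T)
  : Prop :=
  forall U : set T, open U -> U e ->
    exists C : set T, countable C /\
      [set mul c u | c in C & u in U] = [set: T].

Definition rothberger_bounded (T : topologicalType) (mul : T -> T -> T) (e : T)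
  (X : set T) : Prop :=
  forall U : nat -> set T, (forall n, open (U n) /\ U n e) ->
    exists g : nat -> T, X `<=` \bigcup_n ltranslate mul (g n) (U n).

(* X is zero-dimensional (as a subspace): the subspace topology on X has a
   base of clopen sets, i.e. every point x of X and every open U of T with
   x in U, there is a relatively clopen W of X with x in W, W inside U. *)
Definition zero_dimensional_subset (T : topologicalType) (X : set T) : Prop :=
  forall (x : T) (U : set T), X x -> open U -> U x ->
    exists W : set T,
      [/\ W x, W `<=` X `&` U,
          (exists O : set T, open O /\ W = O `&` X) &
          (exists C : set T, closed C /\ W = C `&` X)].

From mathcomp Require Import all_boot all_order all_algebra.
From mathcomp Require Import all_classical all_reals all_analysis.

(* Fix x in X and a neighbourhood U of x.  Choose open neighbourhoods
   N_0 = x^-1 U, N_n of e with N_(n+1)^3 included in N_n, and use Rothberger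
   boundedness to cover X by translates g_n V_n with V_n^-1 V_n inside N_(n+1).
   Let W be the set of points of X reachable from x through a chain of these
   pieces in which no index is used twice.  A product of elements of distinct
   N_(n+1), n >= m, taken in order, lies in N_m (split at the least index and
   induct, as for sums of distinct powers of 1/2), so W is inside x N_0 = U.
   Both W and X \ W are unions of traces of pieces, so W is clopen in X. *)

Set Implicit Arguments.
Unset Strict Implicit.
Unset Printing Implicit Defensive.

Local Open Scope classical_set_scope.

Lemma mem_map_fst_split (I : eqType) (T : Type) (i : I) (s : seq (I * T)) :
  i \in map fst s -> exists s1 b s2, s = s1 ++ (i, b) :: s2.
Proof.
elim: s => [|[j b] s IH] //=; rewrite in_cons => /orP[/eqP ->|/IH].
  by exists [::], b, s.
by case=> s1 [c [s2 ->]]; exists ((j, b) :: s1), c, s2.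
Qed.

Lemma window_shift m k i :
  m <= i < m + k.+1 -> i != m -> m.+1 <= i < m.+1 + k.
Proof.
by move=> /andP[mi ik] im; rewrite addSnnS ik andbT ltn_neqAle eq_sym im.
Qed.

Section Chains.
Variables (T : Type) (P : nat -> T -> Prop).

Fixpoint chain (a : T) (s : seq (nat * T)) : Prop :=
  if s is (n, b) :: s' then [/\ P n a, P n b & chain b s'] else True.

Definition chain_end (a : T) (s : seq (nat * T)) : T := last a (map snd s).

Lemma chain_cat a s1 s2 :
  chain a (s1 ++ s2) <-> chain a s1 /\ chain (chain_end a s1) s2.
Proof.
elim: s1 a => [|[n b] s1 IH] a /=; first by split=> [|[]].
split=> [[Pa Pb /IH[cs1 cs2]]|[[Pa Pb cs1] cs2]] //.
by split=> //; apply/IH.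
Qed.

Lemma chain_end_rcons a s n b : chain_end a (s ++ [:: (n, b)]) = b.
Proof. by rewrite /chain_end map_cat last_cat. Qed.

Definition chain_reach (x y : T) : Prop :=
  exists s, [/\ chain x s, uniq (map fst s) & chain_end x s = y].

Lemma chain_reach_refl x : chain_reach x x.
Proof. by exists [::]. Qed.

(* If index n already occurs in the chain, cut the chain at that step and
   jump from there to z, so that indices stay distinct. *)
Lemma chain_reach_step x y n z :
  chain_reach x y -> P n y -> P n z -> chain_reach x z.
Proof.
case=> s [cs us <-] Py Pz.
have [ns|ns] := boolP (n \in map fst s).
  have [s1 [b [s2 es]]] := mem_map_fst_split ns; subst s.
  move: cs => /chain_cat[cs1 /= [Pb _ _]].
  exists (s1 ++ [:: (n, z)]); split; last exact: chain_end_rcons.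
    by apply/chain_cat.
  move: us; rewrite !map_cat !cat_uniq /= => /and3P[-> /norP[ns1 _] _].
  by rewrite orbF ns1.
exists (s ++ [:: (n, z)]); split; last exact: chain_end_rcons.
  by apply/chain_cat.
by rewrite map_cat cat_uniq us /= orbF ns.
Qed.

Lemma chain_reach_closed (X : set T) x y :
  (forall n c, P n c -> X c) -> X x -> chain_reach x y -> X y.
Proof.
move=> PX + [s [cs _ <-]]; elim: s x cs => [|[n b] s IH] x //= [_ Pb cs] _.
exact: IH cs (PX _ _ Pb).
Qed.

End Chains.

Section GroupChains.
Variables (T : Type) (mul : T -> T -> T) (inv : T -> T) (e : T).
Hypothesis mulA : forall x y z, mul x (mul y z) = mul (mul x y) z.
Hypothesis unitg : forall x, mul e x = x /\ mul x e = x.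
Hypothesis invg : forall x, mul (inv x) x = e /\ mul x (inv x) = e.

Lemma mulg_cancel_mid p c q : mul (mul p c) (mul (inv c) q) = mul p q.
Proof. by rewrite mulA -(mulA p c) (invg c).2 (unitg p).2. Qed.

Lemma invgM a b : inv (mul a b) = mul (inv b) (inv a).
Proof.
have abK : mul (mul a b) (mul (inv b) (inv a)) = e.
  by rewrite mulg_cancel_mid (invg a).2.
by rewrite -[RHS](unitg _).1 -(invg (mul a b)).1 -mulA abK (unitg _).2.
Qed.

Lemma ltranslateE g (A : set T) : ltranslate mul g A = mul (inv g) @^-1` A.
Proof.
rewrite eqEsubset; split=> z.
  by case=> u Au <-; rewrite /= mulA (invg g).1 (unitg u).1.
move=> Az; exists (mul (inv g) z) => //.
by rewrite mulA (invg g).2 (unitg z).1.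
Qed.

Lemma ltranslate_div g (A : set T) c b :
  ltranslate mul g A c -> ltranslate mul g A b ->
  exists2 u, A u & exists2 v, A v & mul (inv c) b = mul (inv u) v.
Proof.
case=> u Au <- [v Av <-]; exists u => //; exists v => //.
by rewrite invgM -mulA (mulA (inv g)) (invg g).1 (unitg v).1.
Qed.

Variables (P : nat -> T -> Prop) (N : nat -> set T).
Hypothesis N_unit : forall n, N n e.
Hypothesis N_cube : forall n u v w,
  N n.+1 u -> N n.+1 v -> N n.+1 w -> N n (mul u (mul v w)).
Hypothesis P_div : forall n c b, P n c -> P n b -> N n.+1 (mul (inv c) b).

Let N_succ n u : N n.+1 u -> N n u.
Proof. by move=> /(N_cube (N_unit _) (N_unit _)); rewrite !(unitg u).1. Qed.

(* The product telescopes along the chain; split it at the step of index m,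
   whose two sides only use indices above m. *)
Lemma chain_window_bound k m a s :
  chain P a s -> uniq (map fst s) ->
  (forall i, i \in map fst s -> m <= i < m + k) ->
  N m (mul (inv a) (chain_end a s)).
Proof.
elim: k m a s => [|k IH] m a s cs us win.
  case: s cs us win => [|[n b] s] _ _ win; first by rewrite (invg a).1.
  by have := win n (mem_head _ _); rewrite addn0 ltnNge => /andP[->].
have [ms|ms] := boolP (m \in map fst s); last first.
  apply/N_succ/IH => // i si; apply: window_shift; first exact: win.
  by apply: contraNneq ms => <-.
have [s1 [b [s2 es]]] := mem_map_fst_split ms; subst s.
move: cs => /chain_cat[cs1 /= [Pc Pb cs2]].
move: us; rewrite map_cat cat_uniq /=.
move=> /and3P[us1 /norP[ms1 _] /andP[ms2 us2]].
have win' (l : seq nat) : {subset l <= map fst (s1 ++ (m, b) :: s2)} ->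
    m \notin l -> forall i, i \in l -> m.+1 <= i < m.+1 + k.
  move=> sub ml i li; apply: window_shift; first exact/win/sub.
  by apply: contraNneq ml => <-.
have sub1 : {subset map fst s1 <= map fst (s1 ++ (m, b) :: s2)}.
  by move=> i; rewrite map_cat mem_cat => ->.
have sub2 : {subset map fst s2 <= map fst (s1 ++ (m, b) :: s2)}.
  by move=> i; rewrite map_cat mem_cat /= in_cons => ->; rewrite !orbT.
have N1 := IH _ _ _ cs1 us1 (win' _ sub1 ms1).
have N3 := IH _ _ _ cs2 us2 (win' _ sub2 ms2).
have := N_cube N1 (P_div Pc Pb) N3.
by rewrite !mulg_cancel_mid /chain_end map_cat last_cat.
Qed.

Lemma chain_reach_bound x y : chain_reach P x y -> N 0 (mul (inv x) y).
Proof.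
case=> s [cs us <-].
apply: (@chain_window_bound (\max_(i <- map fst s) i).+1) => // i si.
by rewrite add0n ltnS (leq_bigmax_seq _ si).
Qed.

End GroupChains.

Section TopologicalGroup.
Variables (T : topologicalType) (mul : T -> T -> T) (inv : T -> T) (e : T).
Hypothesis tgT : topological_group mul inv e.

Lemma continuous_lmul g : continuous (mul g).
Proof.
have [_ _ _ cmul _] := tgT.
move=> x.
apply: (@continuous_comp _ _ _ (pair g) (fun p : T * T => mul p.1 p.2)).
  by apply: cvg_pair; [exact: cvg_cst | exact: cvg_id].
exact: cmul.
Qed.

Lemma open_ltranslate g (A : set T) : open A -> open (ltranslate mul g A).
Proof.
have [mulA unitg invg _ _] := tgT.
rewrite (ltranslateE mulA unitg invg).
by move: (@continuous_lmul (inv g)) => /continuousP; apply.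
Qed.

Lemma open_nbhs_mul_sub (O : set T) : open O -> O e ->
  exists A : set T, [/\ open A, A e & forall u v, A u -> A v -> O (mul u v)].
Proof.
have [_ unitg _ cmul _] := tgT.
move=> oO Oe; have : nbhs (e, e) ((fun p : T * T => mul p.1 p.2) @^-1` O).
  by apply: cmul; rewrite /= (unitg e).1; exact: open_nbhs_nbhs.
case=> [[A B] [/= nA nB] AB_O].
have : nbhs e (A `&` B) by exact: filterI.
rewrite nbhsE => -[C [oC Ce] CAB]; exists C; split=> // u v Cu Cv.
by apply: (AB_O (u, v)); split; [exact: (CAB _ Cu).1 | exact: (CAB _ Cv).2].
Qed.

Lemma open_nbhs_cube_sub (O : set T) : open O -> O e ->
  exists A : set T, [/\ open A, A e &
    forall u v w, A u -> A v -> A w -> O (mul u (mul v w))].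
Proof.
have [_ unitg _ _ _] := tgT.
move=> oO Oe; have [A [oA Ae AA_O]] := open_nbhs_mul_sub oO Oe.
have [B [oB Be BB_A]] := open_nbhs_mul_sub oA Ae.
exists B; split=> // u v w Bu Bv Bw; apply: AA_O; last exact: BB_A.
by rewrite -(unitg u).2; apply: BB_A.
Qed.

Lemma open_nbhs_div_sub (O : set T) : open O -> O e ->
  exists A : set T,
    [/\ open A, A e & forall u v, A u -> A v -> O (mul (inv u) v)].
Proof.
have [mulA unitg invg _ cinv] := tgT.
move=> oO Oe; have [B [oB Be BB_O]] := open_nbhs_mul_sub oO Oe.
exists (B `&` inv @^-1` B); split.
- by apply: openI => //; move: cinv => /continuousP; apply.
- by split=> //=; rewrite -[inv e](unitg _).2 (invg e).1.
- by move=> u v [_ Bu] [Bv _]; apply: BB_O.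
Qed.

Lemma shrinking_nbhs (O : set T) : open O -> O e ->
  exists N : nat -> set T, [/\ N 0 = O, forall n, open (N n) /\ N n e &
    forall n u v w, N n.+1 u -> N n.+1 v -> N n.+1 w -> N n (mul u (mul v w))].
Proof.
move=> oO Oe.
have /choice[f fP] : forall O : {O : set T | open O /\ O e},
    exists A : {A : set T | open A /\ A e}, forall u v w,
      sval A u -> sval A v -> sval A w -> sval O (mul u (mul v w)).
  move=> [V [oV Ve]]; have [A [oA Ae AV]] := open_nbhs_cube_sub oV Ve.
  by exists (exist _ A (conj oA Ae)).
pose O0 : {O : set T | open O /\ O e} := exist _ O (conj oO Oe).
exists (fun n => sval (iter n f O0)).
split=> // n; first exact: (svalP (iter n f O0)).
by move=> u v w; apply: fP.
Qed.

End TopologicalGroup.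

Section ChainComponent.
Variables (T : topologicalType) (X : set T) (V : nat -> set T).
Hypothesis openV : forall n, open (V n).
Hypothesis X_cover : X `<=` \bigcup_n V n.

Definition chain_component (x : T) : set T :=
  chain_reach (fun n c => X c /\ V n c) x.

Variable x : T.
Hypothesis Xx : X x.

Lemma chain_component_sub : chain_component x `<=` X.
Proof. by move=> y; apply: chain_reach_closed Xx => n c []. Qed.

Lemma chain_component_relatively_open :
  exists O, open O /\ chain_component x = O `&` X.
Proof.
exists (\bigcup_(n in [set n | exists2 y, chain_component x y & V n y]) V n).
split; first exact: bigcup_open.
rewrite eqEsubset; split=> y.
  move=> Wy; have Xy := chain_component_sub Wy; split=> //.
  by have [n _ Vny] := X_cover Xy; exists n => //; exists y.
case=> -[n [z Wz Vnz] Vny] Xy.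
exact: chain_reach_step Wz (conj (chain_component_sub Wz) Vnz) (conj Xy Vny).
Qed.

Lemma chain_component_relatively_closed :
  exists C, closed C /\ chain_component x = C `&` X.
Proof.
exists (~` \bigcup_(n in [set n | exists y,
  [/\ X y, V n y & ~ chain_component x y]]) V n).
split; first exact/open_closedC/bigcup_open.
rewrite eqEsubset; split=> y.
  move=> Wy; have Xy := chain_component_sub Wy; split=> //.
  case=> n [z [Xz Vnz nWz]] Vny; apply: nWz.
  exact: chain_reach_step Wy (conj Xy Vny) (conj Xz Vnz).
case=> nO Xy; apply: contrapT => nWy.
by have [n _ Vny] := X_cover Xy; apply: nO; exists n => //; exists y.
Qed.

End ChainComponent.

Theorem proposition3 (T : topologicalType) (mul : T -> T -> T) (inv : T -> T)
  (e : T) :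
  topological_group mul inv e -> tychonoff_space T -> aleph0_bounded mul e ->
  forall X : set T, rothberger_bounded mul e X -> zero_dimensional_subset X.
Proof.
move=> tgT _ _ X RX x U Xx oU Ux; have [mulA unitg invg _ _] := tgT.
pose Ux0 := mul x @^-1` U.
have oUx0 : open Ux0.
  by move: (@continuous_lmul _ _ _ _ tgT x) => /continuousP; apply.
have Ux0e : Ux0 e by rewrite /Ux0 /= (unitg x).2.
have [N [N0 Nnbhs Ncube]] := shrinking_nbhs tgT oUx0 Ux0e.
have /choice[V VP] : forall n, exists A : set T,
    [/\ open A, A e & forall u v, A u -> A v -> N n.+1 (mul (inv u) v)].
  by move=> n; have [oN Ne] := Nnbhs n.+1; exact: (open_nbhs_div_sub tgT oN Ne).
have [n|g X_cover] := RX V; first by have [] := VP n.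
pose piece n := ltranslate mul (g n) (V n).
have open_piece n : open (piece n).
  by apply: (open_ltranslate tgT); have [] := VP n.
exists (chain_component X piece x); split.
- exact: chain_reach_refl.
- move=> y Wy; split; first exact: chain_component_sub Wy.
  have piece_div n c b : X c /\ piece n c -> X b /\ piece n b ->
      N n.+1 (mul (inv c) b).
    move=> [_ c_n] [_ b_n].
    have [u Vu [v Vv ->]] := ltranslate_div mulA unitg invg c_n b_n.
    by have [_ _] := VP n; apply.
  have := chain_reach_bound mulA unitg invg (fun n => (Nnbhs n).2) Ncube
    piece_div Wy.
  by rewrite N0 /Ux0 /= mulA (invg x).2 (unitg y).1.
- exact: chain_component_relatively_open.
- exact: chain_component_relatively_closed.
Qed.
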